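(* Let $r,s,t,a,b,c$ be real numbers with $t\neq0$, and let $M_{H,n}^{(3)}$, $M_{h,n}^{(3)}$ be the matrix sequences defined in the context. Then for every $n\ge0$, $$\big(M_{H,n+1}^{(3)}\big)^{2}=\big(M_{H,1}^{(3)}\big)^{2}M_{h,2n}^{(3)}=M_{H,1}^{(3)}M_{H,2n+1}^{(3)},\qquad \big(M_{H,n+1}^{(3)}\big)^{3}=\big(M_{H,1}^{(3)}\big)^{3}M_{h,3n}^{(3)}=\big(M_{H,1}^{(3)}\big)^{2}M_{H,3n+1}^{(3)}.$$
   Context: The third-order Horadam matrix sequence is the sequence of $3\times3$ matrices defined by $M_{H,n+3}^{(3)}=rM_{H,n+2}^{(3)}+sM_{H,n+1}^{(3)}+tM_{H,n}^{(3)}$ ($n\ge0$) with $M_{H,0}^{(3)}=\begin{pmatrix} b & c-rb & ta\\ a & b-ra & c-rb-sa\\ \frac{1}{t}(c-rb-sa) & a-\frac{r}{t}(c-rb-sa) & \frac1t\big(-sc+(t+rs)b+(s^2-rt)a\big)\end{pmatrix}$, $M_{H,1}^{(3)}=\begin{pmatrix} c & sb+ta & tb\\ b & c-rb & ta\\ a & b-ra & c-rb-sa\end{pmatrix}$, $M_{H,2}^{(3)}=\begin{pmatrix} rc+sb+ta & sc+tb & tc\\ c & sb+ta & tb\\ b & c-rb & ta\end{pmatrix}$. The generalized Tribonacci matrix sequence satisfies the same recurrence with $M_{h,0}^{(3)}=I_3$, $M_{h,1}^{(3)}=\begin{pmatrix} r&s&t\\1&0&0\\0&1&0\end{pmatrix}$,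 $M_{h,2}^{(3)}=\begin{pmatrix} r^2+s&rs+t&rt\\ r&s&t\\ 1&0&0\end{pmatrix}$. *)

From HB Require Import structures.
From mathcomp Require Import all_boot all_order all_algebra.
Set Implicit Arguments. Unset Strict Implicit. Unset Printing Implicit Defensive.
Import Order.TTheory GRing.Theory Num.Theory.
Local Open Scope ring_scope.

(* Generic third-order matrix recurrence X_{n+3} = r X_{n+2} + s X_{n+1} + t X_n
   with initial values X0, X1, X2.  trip n = (X_n, X_{n+1}, X_{n+2}). *)
Fixpoint mx3_trip (R : ringType) (r s t : R) (X0 X1 X2 : 'M[R]_3) (n : nat)
  : 'M[R]_3 * 'M[R]_3 * 'M[R]_3 :=
  match n with
  | 0%N => (X0, X1, X2)
  | n'.+1 => let: (A, B, C) := mx3_trip r s t X0 X1 X2 n' in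
             (B, C, r *: C + s *: B + t *: A)
  end.

Definition mx3_seq (R : ringType) (r s t : R) (X0 X1 X2 : 'M[R]_3) (n : nat)
  : 'M[R]_3 := (mx3_trip r s t X0 X1 X2 n).1.1.

Definition mx3 (R : ringType) (a00 a01 a02 a10 a11 a12 a20 a21 a22 : R) : 'M[R]_3 :=
  \matrix_(i < 3, j < 3)
    nth 0 (nth [::] [:: [:: a00; a01; a02]; [:: a10; a11; a12]; [:: a20; a21; a22]] i) j.

Section Horadam.
Variables (R : fieldType) (r s t a b c : R).

Definition MH0 : 'M[R]_3 :=
  mx3 b (c - r*b) (t*a)
      a (b - r*a) (c - r*b - s*a)
      ((c - r*b - s*a) / t) (a - (r / t) * (c - r*b - s*a))
      ((- s*c + (t + r*s)*b + (s^+2 - r*t)*a) / t).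
Definition MH1 : 'M[R]_3 :=
  mx3 c (s*b + t*a) (t*b)
      b (c - r*b) (t*a)
      a (b - r*a) (c - r*b - s*a).
Definition MH2 : 'M[R]_3 :=
  mx3 (r*c + s*b + t*a) (s*c + t*b) (t*c)
      c (s*b + t*a) (t*b)
      b (c - r*b) (t*a).
Definition Mh0 : 'M[R]_3 := 1%:M.
Definition Mh1 : 'M[R]_3 := mx3 r s t 1 0 0 0 1 0.
Definition Mh2 : 'M[R]_3 := mx3 (r^+2 + s) (r*s + t) (r*t) r s t 1 0 0.

Definition MH (n : nat) : 'M[R]_3 := mx3_seq r s t MH0 MH1 MH2 n.
Definition Mh (n : nat) : 'M[R]_3 := mx3_seq r s t Mh0 Mh1 Mh2 n.
End Horadam.

From HB Require Import structures.
From mathcomp Require Import all_boot all_order all_algebra ring.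
Import GRing.Theory.
Set Implicit Arguments. Unset Strict Implicit. Unset Printing Implicit Defensive.
Local Open Scope ring_scope.

(* Everything follows from M_{h,n} = W^n and M_{H,n+1} = M_{H,1} W^n, where W = M_{h,1} is
   the companion matrix of x^3 - r x^2 - s x - t (so W^3 = r W^2 + s W + t by Cayley-Hamilton)
   and M_{H,1} commutes with W.  Then (M_{H,n+1})^k = (M_{H,1})^k W^(kn), and the stated
   identities are regroupings of these products. *)

Ltac mx3_entrywise := apply/matrixP=> -[[|[|[|?]]] ?] -[[|[|[|?]]] ?] //=;
  rewrite !(mxE, big_ord_recr, big_ord0) /=.

Section GeometricSolution.
Variables (R : comNzRingType) (r s t : R) (W : 'M[R]_3).
Hypothesis W_cubic : W ^+ 3 = r *: W ^+ 2 + s *: W + t *: 1.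

Lemma mx3_trip_geometric (X : 'M[R]_3) n :
  mx3_trip r s t X (X * W) (X * W ^+ 2) n = (X * W ^+ n, X * W ^+ n.+1, X * W ^+ n.+2).
Proof.
elim: n => [|n IHn] /=; first by rewrite expr0 mulr1 expr1.
rewrite IHn; congr (_, _, _).
by rewrite -[n.+3]addn3 exprD W_cubic !mulrDr -!scalerAr mulr1 -exprSr -exprD addn2.
Qed.

Lemma mx3_seq_geometric (X : 'M[R]_3) n :
  mx3_seq r s t X (X * W) (X * W ^+ 2) n = X * W ^+ n.
Proof. by rewrite /mx3_seq mx3_trip_geometric. Qed.

End GeometricSolution.

Section HoradamPowers.
Variables (R : fieldType) (r s t a b c : R).
Hypothesis t_neq0 : t != 0.

Local Notation W := (Mh1 r s t).
Local Notation MH0 := (MH0 r s t a b c).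
Local Notation MH1 := (MH1 r s t a b c).
Local Notation MH2 := (MH2 r s t a b c).

Lemma Mh1_cubic : W ^+ 3 = r *: W ^+ 2 + s *: W + t *: 1.
Proof. rewrite !exprS expr0 !mulr1 -!mulmxE /Mh1 /mx3; mx3_entrywise; ring. Qed.

Lemma Mh2E : Mh2 r s t = W ^+ 2.
Proof. rewrite !exprS expr0 !mulr1 -!mulmxE /Mh1 /Mh2 /mx3; mx3_entrywise; ring. Qed.

Lemma MH0_mulMh1 : MH0 * W = MH1.
Proof.
rewrite -!mulmxE /Mh1 /MH0 /MH1 /mx3; mx3_entrywise.
all: first [ring | by field].
Qed.

Lemma MH1_mulMh1 : MH1 * W = MH2.
Proof. rewrite -!mulmxE /Mh1 /MH2 /MH1 /mx3; mx3_entrywise; ring. Qed.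

Lemma MH1_comm_Mh1 : GRing.comm MH1 W.
Proof. rewrite /GRing.comm -!mulmxE /Mh1 /MH1 /mx3; mx3_entrywise; ring. Qed.

Lemma MhE n : Mh r s t n = W ^+ n.
Proof.
rewrite /Mh Mh2E /Mh0.
have := mx3_seq_geometric Mh1_cubic 1 n.
by rewrite !mul1r => ->.
Qed.

Lemma MH_succE n : MH r s t a b c n.+1 = MH1 * W ^+ n.
Proof.
have MH02 : MH0 * W ^+ 2 = MH2 by rewrite expr2 mulrA MH0_mulMh1 MH1_mulMh1.
by rewrite /MH -MH0_mulMh1 -MH02 (mx3_seq_geometric Mh1_cubic) exprS mulrA.
Qed.

End HoradamPowers.

Lemma exprMn_comm_powr (R : nzRingType) (x w : R) n k :
  GRing.comm x w -> (x * w ^+ n) ^+ k = x ^+ k * w ^+ (k * n).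
Proof.
move=> cxw; rewrite exprMn_comm; last exact: commrX.
by rewrite mulnC exprM.
Qed.

Theorem corollary3p4 (R : realFieldType) (r s t a b c : R) (ht : t != 0) (n : nat) :
  let MHn := MH r s t a b c in
  let Mhn := Mh r s t in
  [/\ MHn n.+1 ^+ 2 = MHn 1%N ^+ 2 *m Mhn (2 * n)%N,
      MHn 1%N ^+ 2 *m Mhn (2 * n)%N = MHn 1%N *m MHn (2 * n).+1,
      MHn n.+1 ^+ 3 = MHn 1%N ^+ 3 *m Mhn (3 * n)%N
    & MHn 1%N ^+ 3 *m Mhn (3 * n)%N = MHn 1%N ^+ 2 *m MHn (3 * n).+1].
Proof.
move=> MHn Mhn; rewrite /MHn /Mhn !MH_succE // !MhE expr0 mulr1 !mulmxE.
have cMH1W := MH1_comm_Mh1 r s t a b c.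
rewrite !exprMn_comm_powr //; split=> //.
- by rewrite mulrA -expr2.
- by rewrite mulrA -exprSr.
Qed.
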